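(* Let $N,k$ be positive integers with $k\le N/2$, and for a real $c\ge3$ with $N/c$ a positive integer define $$\gamma(N,k,c)=\sum_{m=0}^{\lfloor k/2\rfloor}\binom{N/c}{m}^2\binom{(1-2/c)N}{k-2m}.$$ Then $\big(\binom{N}{k}-\gamma(N,k,c)\big)/\binom{N}{k}=O(k/c)$, with an absolute implied constant, for every such $c\ge3$.
   Context: $\big(\binom{N}{k}-\gamma(N,k,c)\big)/\binom{N}{k}$ equals the probability that a balance with $N/c$ coins on each pan is tilted, when the placed coins are chosen among $N$ coins of which $k$ uniformly random ones are false (all false coins having equal weight). *)

(* (concrete reals R), with MathComp's nat binomial 'C(n, k)
   (which is 0 when k > n, unlike Stdlib's Binomial.C). *)
From mathcomp Require Import ssreflect ssrbool ssrnat binomial.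
From Stdlib Require Import Reals.
Open Scope R_scope.

(* gamma(N,k,c) where n = N/c is a positive integer, so (1 - 2/c) N = N - 2n:
   gamma = \sum_{m=0}^{floor(k/2)} C(n,m)^2 * C(N - 2n, k - 2m). *)
Definition gamma (N k n : nat) : R :=
  sum_f_R0 (fun m : nat => INR 'C(n, m) ^ 2 * INR 'C((N - 2 * n)%nat, (k - 2 * m)%nat))
           (k./2)%nat.

From Stdlib Require Import Reals Lra.
From mathcomp Require Import ssreflect ssrbool ssrnat eqtype fintype bigop binomial zify.

Set Implicit Arguments.
Unset Strict Implicit.

(* By Vandermonde, C(N,k) = \sum_j C(2n,j) C(N-2n,k-j), and C(n,m)^2 <= C(2n,2m) is one
   term of C(2n,2m) = \sum_j C(n,j) C(n,2m-j); hence C(N-2n,k) <= gamma <= C(N,k).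
   Removing the 2n coins one at a time lowers C(N,k) by at most C(N-1,k-1) = k C(N,k) / N
   each time, so C(N,k) - gamma <= 2n k C(N,k) / N = 2 k C(N,k) / c. *)

Section BinomialBounds.
Local Open Scope nat_scope.

Definition gamma_nat (N k n : nat) : nat :=
  \sum_(0 <= m < (k./2).+1) 'C(n, m) ^ 2 * 'C(N - 2 * n, k - 2 * m).

Lemma sum_even_le (G : nat -> nat) u :
  \sum_(0 <= m < u.+1) G (2 * m) <= \sum_(0 <= j < (2 * u).+1) G j.
Proof.
elim: u => [|u IH]; first by rewrite !big_nat1.
rewrite big_nat_recr //= (_ : (2 * u.+1).+1 = (2 * u).+3); last by lia.
rewrite (big_nat_recr (2 * u).+2) // (big_nat_recr (2 * u).+1) //=.
rewrite (_ : (2 * u).+2 = 2 * u.+1); lia.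
Qed.

Lemma bin_sq_le_bin_double n m : 'C(n, m) ^ 2 <= 'C(2 * n, 2 * m).
Proof.
have lt_m : m < (2 * m).+1 by lia.
rewrite [2 * n]mul2n -addnn -Vandermonde (bigD1 (Ordinal lt_m)) //=.
by rewrite (_ : 2 * m - m = m) ?leq_addr //; lia.
Qed.

Lemma gamma_nat_le_bin N k n : 2 * n <= N -> gamma_nat N k n <= 'C(N, k).
Proof.
move=> le_2n_N; rewrite -[in 'C(N, k)](subnKC le_2n_N) -Vandermonde.
rewrite -(big_mkord xpredT (fun j => 'C(2 * n, j) * 'C(N - 2 * n, k - j))).
apply: (@leq_trans (\sum_(0 <= m < (k./2).+1) 'C(2 * n, 2 * m) * 'C(N - 2 * n, k - 2 * m))).
  by apply: leq_sum => m _; rewrite leq_mul2r bin_sq_le_bin_double orbT.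
apply: leq_trans (sum_even_le (fun j => 'C(2 * n, j) * 'C(N - 2 * n, k - j)) _) _.
apply: (@le_big_nat _ addn leq leqnn (fun x y => leq_addr y x)) => //.
by rewrite ltnS mul2n -[leqRHS]odd_double_half leq_addl.
Qed.

Lemma bin_le_gamma_nat N k n : 'C(N - 2 * n, k) <= gamma_nat N k n.
Proof. by rewrite /gamma_nat big_ltn // bin0 muln0 subn0 mul1n leq_addr. Qed.

Lemma bin_sub_le N k t : t <= N -> 'C(N, k.+1) - 'C(N - t, k.+1) <= t * 'C(N.-1, k).
Proof.
elim: t => [|t IH] le_t_N; first by rewrite subn0 subnn.
have step : 'C(N - t, k.+1) = 'C(N - t.+1, k.+1) + 'C(N - t.+1, k).
  by rewrite -binS; congr 'C(_, _); lia.
have mono : 'C(N - t.+1, k) <= 'C(N.-1, k) by apply: leq_bin2l; lia.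
have := IH (ltnW le_t_N); lia.
Qed.

Lemma bin_deficit_le N k t : 0 < k -> t <= N ->
  N * ('C(N, k) - 'C(N - t, k)) <= t * k * 'C(N, k).
Proof.
case: k => [//|k] _ le_t_N.
apply: leq_trans (leq_mul (leqnn N) (bin_sub_le k le_t_N)) _.
by rewrite mulnCA mul_bin_diag mulnA.
Qed.

Lemma gamma_deficit_le N k n : 0 < k -> 2 * n <= N ->
  N * ('C(N, k) - gamma_nat N k n) <= 2 * n * k * 'C(N, k).
Proof.
move=> k_gt0 le_2n_N; apply: leq_trans _ (bin_deficit_le k_gt0 le_2n_N).
by rewrite leq_mul2l leq_sub2l ?bin_le_gamma_nat ?orbT.
Qed.

End BinomialBounds.

Lemma gamma_natE N k n : gamma N k n = INR (gamma_nat N k n).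
Proof.
rewrite /gamma /gamma_nat; elim: k./2 => [|u IH].
  by rewrite /= big_nat1 -mulnn !mult_INR; ring.
by rewrite /= IH [in RHS]big_nat_recr //= plus_INR -mulnn !mult_INR; ring.
Qed.

Theorem lemma6 :
  exists K : R, forall (N k : nat) (c : R) (n : nat),
    (0 < N)%nat -> (0 < k)%nat -> (2 * k <= N)%nat ->
    3 <= c -> (0 < n)%nat -> INR N / c = INR n ->
    Rabs ((INR 'C(N, k) - gamma N k n) / INR 'C(N, k)) <= K * (INR k / c).
Proof.
exists 2 => N k c n _ k_gt0 le_2k_N c_ge3 n_gt0 Nc_eq_n.
have n_pos : 0 < INR n by apply/lt_0_INR/ltP.
have N_eq : INR N = c * INR n by rewrite -Nc_eq_n; field; lra.
have le_2n_N : (2 * n <= N)%nat by apply/leP/INR_le; rewrite mult_INR N_eq /=; nra.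
have C_pos : 0 < INR 'C(N, k) by apply/lt_0_INR/ltP; rewrite bin_gt0; lia.
have g_le_C := gamma_nat_le_bin k le_2n_N.
have g_le_C_R := le_INR _ _ (elimT leP g_le_C).
have deficit := le_INR _ _ (elimT leP (gamma_deficit_le k_gt0 le_2n_N)).
rewrite !mult_INR minus_INR /= in deficit; last exact/leP.
rewrite gamma_natE Rabs_right; last by apply/Rle_ge/Rmult_le_pos; [lra | apply/Rlt_le/Rinv_0_lt_compat].
apply/(Rmult_le_reg_r (c * INR n * INR 'C(N, k))); first by repeat apply: Rmult_lt_0_compat; lra.
have -> : (INR 'C(N, k) - INR (gamma_nat N k n)) / INR 'C(N, k) * (c * INR n * INR 'C(N, k))
  = INR N * (INR 'C(N, k) - INR (gamma_nat N k n)) by rewrite N_eq; field; lra.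
have -> : 2 * (INR k / c) * (c * INR n * INR 'C(N, k)) = (1 + 1) * INR n * INR k * INR 'C(N, k)
  by field; lra.
exact: deficit.
Qed.
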